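(* Let $\Gamma$ be a triangulation of a connected closed surface with a $z$-orientation such that all faces are of type I and all zigzags are homogeneous. If $\Gamma$ has exactly two vertices of type I, then $\Gamma$ is (isomorphic to) a bipyramid $BP_n$ for some $n\ge3$.
   Context: A triangulation of a connected closed surface $M$ is a $2$-cell embedding of a connected simple finite graph in $M$ with all faces triangles. A zigzag is a sequence of edges $(e_i)$ such that $e_i,e_{i+1}$ are distinct edges of a common face, the face containing $e_i,e_{i+1}$ differs from that containing $e_{i+1},e_{i+2}$, and $e_i,e_{i+2}$ have no common vertex; it is a cyclic sequence passing through each edge in a definite direction; its reversal is a zigzag. A $z$-orientation is a set of zigzags containing exactly one of $Z,Z^{-1}$ for each zigzag $Z$; each edge is passed twice in total by its zigzags and is of type I if the two passages have opposite directions, of type II otherwise. A vertex is of type I if all its edges are of type I. A face is of type I if it contains exactly two edges of type I. When all faces are of type I, a zigzag is homogeneous if it is a cyclic sequence $e_1,e_1',e_1'',\dots,e_m,e_m',e_m''$ with the $e_i$ of type II and the $e_i',e_i''$ of type I. The bipyramid $BP_n$ is the triangulation of the sphere with vertices $1,\dots,n,a,b$, edges $i(i+1)$ (mod $n$), $ai$, $bi$, and faces $\{a,i,i+1\},\{b,i,i+1\}$. *)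

From mathcomp Require Import all_boot.
Set Implicit Arguments. Unset Strict Implicit. Unset Printing Implicit Defensive.

Section Tri.
Variable V : finType.
Variable F : {set {set V}}.

Definition adj : rel V :=
  fun u v => (u != v) && [exists f in F, (u \in f) && (v \in f)].

Definition link (v : V) : rel V := fun x y => [set v; x; y] \in F.

Definition is_triangulation : Prop :=
  0 < #|V| /\
  [/\ forall f, f \in F -> #|f| = 3,
      forall u v, adj u v -> #|[set f in F | (u \in f) && (v \in f)]| = 2,
      forall v, exists2 f, f \in F & v \in f,
      forall v x y, adj v x -> adj v y -> connect (link v) x y
    & forall u v, connect adj u v ].

(* Zigzags are encoded by "states" (x_i, x_(i+1), x_(i+2)) *)
Definition state := (V * V * V)%type.
Definition isState (s : state) : bool := [set s.1.1; s.1.2; s.2] \in F.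

Definition zstep (s t : state) : bool :=
  [&& t.1.1 == s.1.2, t.1.2 == s.2, isState s, isState t & t.2 != s.1.1].

Definition rev3 (s : state) : state := (s.2, s.1.2, s.1.1).

(* S = set of states lying on the zigzags of the z-orientation *)
Definition z_orientation (S : pred state) : Prop :=
  (forall s t, zstep s t -> S t = S s) /\
  (forall s, isState s -> S (rev3 s) = ~~ S s).

(* number of passages of the directed edge u -> v *)
Definition npass (S : pred state) (u v : V) : nat :=
  #|[set s : state | [&& isState s, S s & s.1 == (u, v)]]|.

Definition edgeI (S : pred state) (u v : V) : bool :=
  (npass S u v == 1) && (npass S v u == 1).

Definition vertexI (S : pred state) (v : V) : bool :=
  [forall u, adj v u ==> edgeI S v u].

Definition faceI (S : pred state) (f : {set V}) : bool :=
  [forall a, forall b, forall c,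
     ([set a; b; c] == f) ==> (edgeI S a b + edgeI S b c + edgeI S c a == 2)].

Definition all_homogeneous (S : pred state) : Prop :=
  forall s t r, S s -> zstep s t -> zstep t r ->
    ~~ edgeI S s.1.1 s.1.2 + ~~ edgeI S t.1.1 t.1.2 + ~~ edgeI S r.1.1 r.1.2 = 1.

End Tri.

(* Bipyramid BP_n: ring vertices inl i, apexes a = inr true, b = inr false *)
Definition BPV (n : nat) : finType := ('I_n + bool)%type.
Definition BPfaces (n : nat) : {set {set BPV n}} :=
  [set [set (inr true : BPV n); inl i; inl (ordS i)] | i : 'I_n] :|:
  [set [set (inr false : BPV n); inl i; inl (ordS i)] | i : 'I_n].

Definition tri_iso (V W : finType) (F : {set {set V}}) (G : {set {set W}}) : Prop :=
  exists g : V -> W, bijective g /\ forall X : {set V}, (X \in F) = (g @: X \in G).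

From mathcomp Require Import all_boot.
Set Implicit Arguments. Unset Strict Implicit. Unset Printing Implicit Defensive.

(* The proof has four parts.
   1. A finite symmetric irreflexive relation in which every vertex having a
      neighbour has exactly two of them is, on each connected component, a
      cycle of length at least 3 (section DegreeTwoCycle).  Since every edge
      lies in exactly two faces, this applies to the (connected) link of a
      vertex, which is therefore a cycle (section Triangulation).
   2. Local analysis of the z-orientation (section ZOrientation): every face
      has exactly two edges of type I; homogeneity propagates type II edges
      around a link, so the vertex opposite an edge of type II is of type I,
      while the edge opposite a vertex of type I is of type II.  Hence every
      face contains a vertex of type I and no two such vertices are adjacent.
   3. With exactly two type-I vertices a, b, every face is {a,p,q} or {b,p,q},
      and {b,p,q} is a face iff {a,p,q} is; every other vertex lies in the link
      of a.
   4. Numbering the link of a as a cycle c_0, ..., c_(n-1) and sending the ring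
      vertex i of BP_n to c_i and the two apexes to a and b gives a bijection
      mapping the faces of BP_n exactly onto the faces of the triangulation
      (section Bipyramid). *)

Section Set3.
Variable T : finType.
Implicit Types x y z : T.

Lemma set3C12 x y z : [set x; y; z] = [set y; x; z].
Proof. by apply/setP=> t; rewrite !inE; case: (t == x); case: (t == y); case: (t == z). Qed.

Lemma set3C23 x y z : [set x; y; z] = [set x; z; y].
Proof. by apply/setP=> t; rewrite !inE; case: (t == x); case: (t == y); case: (t == z). Qed.

Lemma set3_rotl x y z : [set x; y; z] = [set y; z; x].
Proof. by apply/setP=> t; rewrite !inE; case: (t == x); case: (t == y); case: (t == z). Qed.

Lemma set3_rotr x y z : [set x; y; z] = [set z; x; y].
Proof. by apply/setP=> t; rewrite !inE; case: (t == x); case: (t == y); case: (t == z). Qed.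

Lemma set3_rev x y z : [set x; y; z] = [set z; y; x].
Proof. by apply/setP=> t; rewrite !inE; case: (t == x); case: (t == y); case: (t == z). Qed.

Lemma set3_card3 x y z : #|[set x; y; z]| = 3 -> [/\ x != y, y != z & x != z].
Proof.
have card_le2 (p r : T) : #|[set p; p; r]| <= 2 by rewrite setUid cards2; case: (p != r).
move=> card3; split; apply/eqP=> E.
- by move: card3 (card_le2 y z); rewrite E => ->.
- by move: card3 (card_le2 z x); rewrite set3_rotl E => ->.
- by move: card3 (card_le2 z y); rewrite set3_rotr E => ->.
Qed.

End Set3.

Ltac face_perm H := move: H; first
  [ done | by rewrite set3C12 | by rewrite set3C23 | by rewrite set3_rotl
  | by rewrite set3_rotr | by rewrite set3_rev ].

Lemma tri_iso_of_bij (V W : finType) (F : {set {set V}}) (G : {set {set W}})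
    (h : W -> V) :
  bijective h -> (forall Y : {set W}, (h @: Y \in F) = (Y \in G)) -> tri_iso F G.
Proof.
case=> g hg gh h_face; exists g; split; first by exists h.
move=> X; have -> : X = h @: (g @: X).
  by rewrite -imset_comp (eq_imset _ gh) imset_id.
by rewrite h_face -imset_comp (eq_imset _ hg) imset_id.
Qed.

Section DegreeTwoCycle.
Variable T : finType.
Variable e : rel T.
Hypothesis e_sym : forall p q, e p q -> e q p.
Hypothesis e_irr : forall p q, e p q -> p != q.
Hypothesis e_deg_le2 : forall p q1 q2 q3, e p q1 -> e p q2 -> e p q3 ->
  q1 != q2 -> q1 != q3 -> q2 != q3 -> False.
Hypothesis e_deg_ge2 : forall p q, e p q -> exists2 r, r != q & e p r.
Variables x0 x1 : T.
Hypothesis e01 : e x0 x1.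

Definition forward (p q : T) : T := odflt q [pick r | e q r && (r != p)].

Lemma forwardP p q : e p q -> e q (forward p q) /\ forward p q != p.
Proof.
move=> epq; rewrite /forward; case: pickP => [r /andP [] //|none].
have [r rp eqr] := e_deg_ge2 (e_sym epq).
by move: (none r); rewrite eqr rp.
Qed.

Definition walk_pair (i : nat) : T * T :=
  iter i (fun pq => (pq.2, forward pq.1 pq.2)) (x0, x1).
Definition walk (i : nat) : T := (walk_pair i).1.

Lemma walk_edge i : e (walk i) (walk i.+1).
Proof. by elim: i => [|i IH] //; exact: (forwardP IH).1. Qed.

Lemma walk_nonbacktracking i : walk i.+2 != walk i.
Proof. exact: (forwardP (walk_edge i)).2. Qed.

(* As the degree is at most two, the walk sees every neighbour of its vertices. *)
Lemma walk_nbr i y : e (walk i.+1) y -> y = walk i \/ y = walk i.+2.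
Proof.
move=> ey; case: (eqVneq y (walk i)) => [->|yi]; first by left.
case: (eqVneq y (walk i.+2)) => [->|yi2]; first by right.
exfalso; apply: (e_deg_le2 (e_sym (walk_edge i)) (walk_edge i.+1) ey).
- by rewrite eq_sym walk_nonbacktracking.
- by rewrite eq_sym.
- by rewrite eq_sym.
Qed.

Definition repeats (j : nat) : bool :=
  (0 < j) && has (fun k => walk k == walk j) (iota 0 j).

Lemma exists_repeat : exists j, repeats j.
Proof.
have : ~~ uniq (map walk (iota 0 #|T|.+1)).
  apply/negP=> /card_uniqP; rewrite size_map size_iota => card_walk.
  by have := max_card (mem (map walk (iota 0 #|T|.+1))); rewrite card_walk ltnn.
case/(uniqPn x0) => i [j [ij]]; rewrite size_map size_iota => jN.
rewrite !(nth_map 0) ?size_iota ?(ltn_trans ij) //.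
rewrite !nth_iota ?(ltn_trans ij) // !add0n => Eij.
exists j; rewrite /repeats (leq_ltn_trans _ ij) //=; apply/hasP; exists i.
  by rewrite mem_iota.
by rewrite Eij.
Qed.

(* The first repeated vertex of the walk is its starting point: otherwise the
   vertex repeated would have three neighbours, or the walk would backtrack. *)
Lemma walk_first_return m : 0 < m ->
  (forall i k, i < k -> k < m -> walk i != walk k) ->
  (exists2 i, i < m & walk i = walk m) -> walk m = walk 0.
Proof.
case: m => [//|m] _ walk_uniq [[|i] im Ei]; first by rewrite Ei.
have im' : i < m by [].
have := e_sym (walk_edge m); rewrite -Ei => /walk_nbr [] Em.
  by have := walk_uniq _ _ im' (ltnSn m); rewrite Em eqxx.
case: (ltngtP i.+2 m) => cmp.
- by have := walk_uniq _ _ cmp (ltnSn m); rewrite Em eqxx.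
- have mi : m = i.+1 by apply/eqP; rewrite eqn_leq im' -ltnS cmp.
  by have := e_irr (walk_edge m); rewrite {1}Em mi eqxx.
- by have := walk_nonbacktracking i.+1; rewrite Ei -cmp eqxx.
Qed.

Definition period : nat := ex_minn exists_repeat.

Lemma periodP : repeats period /\ forall j, repeats j -> period <= j.
Proof. by rewrite /period; case: ex_minnP. Qed.

Lemma period_gt0 : 0 < period.
Proof. by case: periodP => /andP []. Qed.

Lemma walk_uniq i k : i < k -> k < period -> walk i != walk k.
Proof.
move=> ik kp; apply/eqP=> Eik; have [_ /(_ k) period_min] := periodP.
suff /period_min : repeats k by rewrite leqNgt kp.
rewrite /repeats (leq_ltn_trans _ ik) //=; apply/hasP; exists i.
  by rewrite mem_iota.
by rewrite Eik.
Qed.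

(* At the period the walk is back at x0, then at x1; a cycle has length
   at least 3 since the walk neither stays put nor backtracks. *)
Lemma walk_period : walk period = walk 0.
Proof.
apply: walk_first_return period_gt0 walk_uniq _.
have [/andP [_ /hasP [i]]] := periodP; rewrite mem_iota add0n => /= ip /eqP Ei _.
by exists i.
Qed.

Lemma period_ge3 : 3 <= period.
Proof.
move: period_gt0 walk_period; case: period => [|[|[|m]]] // _.
- by have := e_irr (walk_edge 0); rewrite eq_sym => /eqP.
- by move=> E2; have := walk_nonbacktracking 0; rewrite E2 eqxx.
Qed.

Lemma walk_periodS : walk period.+1 = walk 1.
Proof.
have e_last : e (walk period.-1.+1) (walk 1).
  by rewrite prednK ?period_gt0 // walk_period; exact: walk_edge.
case: (walk_nbr e_last) => [E1|]; last by rewrite prednK ?period_gt0.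
have /walk_uniq : 1 < period.-1 by rewrite -subn1 ltn_subRL addn1 period_ge3.
by rewrite ltn_predL period_gt0 E1 eqxx => /(_ isT).
Qed.

Lemma walk_mod i : walk (i %% period) = walk i.
Proof.
have Epair : walk_pair period = walk_pair 0.
  rewrite (surjective_pairing (walk_pair period)) (surjective_pairing (walk_pair 0)).
  by congr pair; [exact: walk_period | exact: walk_periodS].
have shift k : walk (k + period) = walk k by rewrite /walk /walk_pair iterD -/(walk_pair period) Epair.
rewrite [in RHS](divn_eq i period); elim: (i %/ period) => [|q IH].
  by rewrite mul0n add0n.
by rewrite mulSn -addnA addnC shift.
Qed.

Lemma walk_edges p q : (exists2 i, i < period & p = walk i) -> e p q ->
  exists2 j, j < period &
    ((p == walk j) && (q == walk j.+1)) || ((q == walk j) && (p == walk j.+1)).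
Proof.
case=> -[|i] ip -> epq.
  have e_last : e (walk period.-1.+1) q by rewrite prednK ?period_gt0 // walk_period.
  case: (walk_nbr e_last) => ->.
    exists period.-1; first by rewrite ltn_predL period_gt0.
    by rewrite prednK ?period_gt0 // walk_period !eqxx orbT.
  by exists 0; rewrite ?period_gt0 // prednK ?period_gt0 // walk_periodS !eqxx.
case: (walk_nbr epq) => ->; first by exists i; [exact: ltnW | rewrite !eqxx orbT].
by exists i.+1 => //; rewrite !eqxx.
Qed.

Lemma walk_cover y : connect e x0 y -> exists2 i, i < period & y = walk i.
Proof.
case/connectP=> p pth ->.
have : exists2 i, i < period & x0 = walk i by exists 0; rewrite ?period_gt0.
elim: p x0 pth => [|r p IH] z //= /andP [ezr pth] z_on.
apply: IH pth _.
have [j jp /orP [/andP [_ /eqP ->]|/andP [/eqP -> _]]] := walk_edges z_on ezr.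
  by exists (j.+1 %% period); [exact: ltn_pmod period_gt0 | rewrite walk_mod].
by exists j.
Qed.

Lemma degree2_cycle : exists n (c : nat -> T),
  [/\ 3 <= n,
      forall i j, i < n -> j < n -> c i = c j -> i = j,
      forall i, c (i %% n) = c i,
      forall i, e (c i) (c i.+1)
    & forall p q, connect e x0 p -> e p q -> exists2 j, j < n &
          ((p == c j) && (q == c j.+1)) || ((q == c j) && (p == c j.+1))]
  /\ forall y, connect e x0 y -> exists2 i, i < n & y = c i.
Proof.
exists period, walk; split; last exact: walk_cover.
split; [exact: period_ge3 | | exact: walk_mod | exact: walk_edge |].
- move=> i j ip jp Eij; case: (ltngtP i j) => // cmp.
    by have := walk_uniq cmp jp; rewrite Eij eqxx.
  by have := walk_uniq cmp ip; rewrite Eij eqxx.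
- by move=> p q /walk_cover; apply: walk_edges.
Qed.

End DegreeTwoCycle.

Section Triangulation.
Variable V : finType.
Variable F : {set {set V}}.
Hypothesis card3 : forall f, f \in F -> #|f| = 3.
Hypothesis two_faces : forall u v, adj F u v ->
  #|[set f in F | (u \in f) && (v \in f)]| = 2.
Hypothesis face_cover : forall v, exists2 f, f \in F & v \in f.
Hypothesis link_connected : forall v x y, adj F v x -> adj F v y -> connect (link F v) x y.

Lemma face_distinct x y z : [set x; y; z] \in F -> [/\ x != y, y != z & x != z].
Proof. by move/card3/set3_card3. Qed.

Lemma face_third f y z : f \in F -> y \in f -> z \in f -> y != z ->
  exists w, f = [set y; z; w].
Proof.
move=> fF yf zf yz.
have : #|f :\: [set y; z]| == 1.
  have := cardsID [set y; z] f; rewrite (card3 fF).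
  have -> : f :&: [set y; z] = [set y; z].
    by apply/setP=> t; rewrite !inE; do 2!case: eqP => [->|_]; rewrite ?yf ?zf ?andbF.
  by rewrite cards2 yz add2n => -[->].
case/cards1P=> w Ew; exists w; apply/setP=> t.
have := congr1 (fun A : {set V} => t \in A) Ew; rewrite !inE /=.
case: (eqVneq t y) => [->|ty]; first by rewrite yf.
case: (eqVneq t z) => [->|tz]; first by rewrite zf orbT.
by rewrite /= => ->.
Qed.

Lemma face_through f v : f \in F -> v \in f -> exists u w, f = [set v; u; w].
Proof.
move=> fF vf; have : 0 < #|f :\ v|.
  by have := card3 fF; rewrite (cardsD1 v f) vf add1n => -[->].
case/card_gt0P=> u; rewrite !inE => /andP [uv uf].
have vu : v != u by rewrite eq_sym.
by have [w Ew] := face_third fF vf uf vu; exists u, w.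
Qed.

Lemma face_triple f : f \in F -> exists u v w, f = [set u; v; w].
Proof.
move=> fF; have : 0 < #|f| by rewrite card3.
by case/card_gt0P=> u /(face_through fF) [v [w ->]]; exists u, v, w.
Qed.

Lemma vertex_face v : exists u w, [set v; u; w] \in F.
Proof.
have [f fF vf] := face_cover v.
by have [u [w Ef]] := face_through fF vf; exists u, w; rewrite -Ef.
Qed.

Lemma face_adj x y z : [set x; y; z] \in F -> adj F x y.
Proof.
move=> xyz; have [xy _ _] := face_distinct xyz; rewrite /adj xy /=.
by apply/existsP; exists [set x; y; z]; rewrite xyz !inE !eqxx /= orbT.
Qed.

Lemma adj_face u v : adj F u v -> exists w, [set u; v; w] \in F.
Proof.
case/andP=> uv /existsP [f /andP [fF /andP [uf vf]]].
by have [w Ew] := face_third fF uf vf uv; exists w; rewrite -Ew.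
Qed.

Lemma face_third_unique y z w1 w2 : [set y; z; w1] \in F ->
  [set y; z; w1] = [set y; z; w2] -> w1 = w2.
Proof.
move=> yzw1 E; have [_ zw1 yw1] := face_distinct yzw1.
have := congr1 (fun A : {set V} => w1 \in A) E; rewrite !inE eqxx orbT /=.
by rewrite eq_sym (negPf yw1) eq_sym (negPf zw1) /= => /esym /eqP.
Qed.

Lemma opposite_face x y z : [set x; y; z] \in F ->
  exists w, w != x /\ [set y; z; w] \in F.
Proof.
move=> xyz; have yzx : [set y; z; x] \in F by face_perm xyz.
have := two_faces (face_adj yzx); set A := [set f in F | _ & _].
have xyzA : [set x; y; z] \in A by rewrite inE xyz !inE !eqxx /= !orbT.
rewrite (cardsD1 [set x; y; z]) xyzA add1n => -[] /eqP /cards1P [f1 Ef1].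
have : f1 \in A :\ [set x; y; z] by rewrite Ef1 inE.
rewrite !inE => /and3P [f1_new f1F /andP [yf1 zf1]].
have [yz _ _] := face_distinct yzx.
have [w Ew] := face_third f1F yf1 zf1 yz.
exists w; split; last by rewrite -Ew.
by apply: contra f1_new => /eqP wx; rewrite Ew wx -set3_rotl.
Qed.

Lemma edge_faces_le2 y z w1 w2 w3 :
  [set y; z; w1] \in F -> [set y; z; w2] \in F -> [set y; z; w3] \in F ->
  w1 != w2 -> w1 != w3 -> w2 != w3 -> False.
Proof.
move=> f1 f2 f3 w12 w13 w23.
have := two_faces (face_adj f1); set A := [set f in F | _ & _].
have sub : [set [set y; z; w1]; [set y; z; w2]; [set y; z; w3]] \subset A.
  apply/subsetP=> f; rewrite !inE => /orP [/orP []|] /eqP ->;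
  by rewrite ?f1 ?f2 ?f3 !inE !eqxx /= ?orbT.
have d12 : [set y; z; w1] != [set y; z; w2] by apply: contra w12 => /eqP /(face_third_unique f1) ->.
have d13 : [set y; z; w1] != [set y; z; w3] by apply: contra w13 => /eqP /(face_third_unique f1) ->.
have d23 : [set y; z; w2] != [set y; z; w3] by apply: contra w23 => /eqP /(face_third_unique f2) ->.
move: (subset_leq_card sub).
rewrite (setUC [set [set y; z; w1]; [set y; z; w2]]) cardsU1 cards2 !inE d12.
rewrite eq_sym (negPf d13) eq_sym (negPf d23) => le_card card_A.
by rewrite card_A in le_card.
Qed.

(* The
   link relation has degree two because every edge lies in two faces. *)
Lemma link_cycle v u w : [set v; u; w] \in F ->
  exists n (c : nat -> V),
  [/\ 3 <= n,
      forall i j, i < n -> j < n -> c i = c j -> i = j,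
      forall i, c (i %% n) = c i,
      forall i, [set v; c i; c i.+1] \in F
    & forall p q, [set v; p; q] \in F -> exists2 j, j < n &
          ((p == c j) && (q == c j.+1)) || ((q == c j) && (p == c j.+1))]
  /\ forall y, adj F v y -> exists2 i, i < n & y = c i.
Proof.
move=> vuw; have vu := face_adj vuw.
have link_sym p q : link F v p q -> link F v q p by rewrite /link => vpq; face_perm vpq.
have link_irr p q : link F v p q -> p != q by case/face_distinct.
have link_ge2 p q : link F v p q -> exists2 r, r != q & link F v p r.
  move=> vpq; have qvp : [set q; v; p] \in F by face_perm vpq.
  by have [r [rq vpr]] := opposite_face qvp; exists r.
have [n [c [[n3 c_inj c_mod c_face c_edges] c_cover]]] :=
  degree2_cycle link_sym link_irr (@edge_faces_le2 v) link_ge2 (vuw : link F v u w).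
exists n, c; split; last by move=> y vy; apply: c_cover; exact: link_connected vy.
split=> // p q vpq; exact: c_edges (link_connected vu (face_adj vpq)) vpq.
Qed.

Section ZOrientation.
Variable S : pred (state V).
Hypothesis zstep_inv : forall s t, zstep F s t -> S t = S s.
Hypothesis zrev : forall s, isState F s -> S (rev3 s) = ~~ S s.
Hypothesis facesI : forall f, f \in F -> faceI F S f.
Hypothesis homogeneous : all_homogeneous F S.

Local Notation eI := (edgeI F S).
Local Notation vI := (vertexI F S).

Lemma edgeI_sym u v : eI u v = eI v u.
Proof. by rewrite /edgeI andbC. Qed.

Lemma face_edgeI x y z : [set x; y; z] \in F -> eI x y + eI y z + eI z x = 2.
Proof.
move/facesI/forallP/(_ x)/forallP/(_ y)/forallP/(_ z).
by rewrite eqxx => /eqP.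
Qed.

Lemma face_typeII x y z : [set x; y; z] \in F -> ~~ eI x y -> eI y z /\ eI z x.
Proof. by move/face_edgeI; case: (eI x y); case: (eI y z); case: (eI z x). Qed.

Lemma face_typeI x y z : [set x; y; z] \in F -> eI y z -> eI z x -> ~~ eI x y.
Proof. by move/face_edgeI; case: (eI x y); case: (eI y z); case: (eI z x). Qed.

Lemma zstep_faces x y z w : [set x; y; z] \in F -> [set y; z; w] \in F -> w != x ->
  zstep F (x, y, z) (y, z, w).
Proof. by move=> xyz yzw wx; rewrite /zstep /isState /= !eqxx xyz yzw wx. Qed.

(* The zigzag
   through x y, y z (in one direction or the other) continues with z w, which
   homogeneity forces to be of type I; the face {w, y, z} then has its two
   type-I edges at z. *)
Lemma typeII_across x y z w : [set x; y; z] \in F -> [set w; y; z] \in F ->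
  x != w -> eI y z -> ~~ eI x y -> ~~ eI w y.
Proof.
move=> xyz wyz xw Iyz IIxy; have wx : w != x by rewrite eq_sym.
have yzw : [set y; z; w] \in F by face_perm wyz.
have two_w := face_edgeI wyz.
case Sx: (S (x, y, z)).
  have [q [qy zwq]] := opposite_face yzw.
  have := homogeneous Sx (zstep_faces xyz yzw wx) (zstep_faces yzw zwq qy).
  rewrite /= Iyz IIxy /= (edgeI_sym z w).
  by move: two_w; rewrite Iyz (edgeI_sym z w); case: (eI w y); case: (eI w z).
have Sz : S (z, y, x) by have := zrev (s := (x, y, z)) xyz; rewrite Sx.
have wzy : [set w; z; y] \in F by face_perm wyz.
have zyx : [set z; y; x] \in F by face_perm xyz.
have Sw : S (w, z, y) by rewrite -(zstep_inv (zstep_faces wzy zyx xw)).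
have [p [pz yxp]] := opposite_face zyx.
have := homogeneous Sw (zstep_faces wzy zyx xw) (zstep_faces zyx yxp pz).
rewrite /= (edgeI_sym z y) Iyz (edgeI_sym y x) IIxy /=.
by move: two_w; rewrite Iyz (edgeI_sym z w); case: (eI w y); case: (eI w z).
Qed.

Definition typeI_spoke (c q : V) : bool :=
  eI c q && [forall p, link F c q p ==> ~~ eI q p].

Lemma typeI_spoke_next c q r : typeI_spoke c q -> link F c q r -> typeI_spoke c r.
Proof.
case/andP=> Icq /forallP IIq cqr; rewrite /link in cqr.
have IIqr : ~~ eI q r := implyP (IIq r) cqr.
have qrc : [set q; r; c] \in F by face_perm cqr.
have [Irc _] := face_typeII qrc IIqr.
apply/andP; split; first by rewrite edgeI_sym.
apply/forallP=> s; apply/implyP=> crs; rewrite /link in crs.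
case: (eqVneq s q) => [->|sq]; first by rewrite edgeI_sym.
have src : [set s; r; c] \in F by face_perm crs.
have qs : q != s by rewrite eq_sym.
by rewrite edgeI_sym; exact: (typeII_across qrc src qs Irc IIqr).
Qed.

Lemma vertexI_of_typeII a b c : [set a; b; c] \in F -> ~~ eI a b -> vI c.
Proof.
move=> abc IIab.
have spoke_a : typeI_spoke c a.
  have [_ Ica] := face_typeII abc IIab.
  apply/andP; split => //; apply/forallP=> p; apply/implyP=> cap.
  case: (eqVneq p b) => [->|pb]; first by rewrite IIab.
  have bac : [set b; a; c] \in F by face_perm abc.
  have pac : [set p; a; c] \in F by rewrite /link in cap; face_perm cap.
  have bp : b != p by rewrite eq_sym.
  have Iac : eI a c by rewrite edgeI_sym.
  have IIba : ~~ eI b a by rewrite edgeI_sym.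
  by rewrite edgeI_sym (typeII_across bac pac bp Iac IIba).
(* Every neighbour u of c is reached from a along the link of c, and the
   spoke property propagates along the way. *)
apply/forallP=> u; apply/implyP=> cu.
have ca : adj F c a by apply: (@face_adj c a b); face_perm abc.
case/connectP: (link_connected ca cu) => p pth ->.
suff /andP [] : typeI_spoke c (last a p) by [].
elim: p a spoke_a pth {abc IIab ca} => [|r p IH] q spoke_q //=.
by case/andP=> cqr pth; apply: IH pth; exact: typeI_spoke_next spoke_q cqr.
Qed.

Lemma typeII_of_vertexI c p q : vI c -> [set c; p; q] \in F -> ~~ eI p q.
Proof.
move=> /forallP Ic cpq; apply: (@face_typeI p q c); first by face_perm cpq.
- rewrite edgeI_sym; apply: (implyP (Ic q)); apply: (@face_adj c q p); face_perm cpq.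
- exact: (implyP (Ic p) (face_adj cpq)).
Qed.

Lemma vertexI_face_nbr c p q : vI c -> [set c; p; q] \in F -> ~~ vI p.
Proof.
move=> Ic cpq; apply/negP=> /forallP /(_ q) /implyP Ip.
have pqc : [set p; q; c] \in F by face_perm cpq.
by have := typeII_of_vertexI Ic cpq; rewrite Ip // (face_adj pqc).
Qed.

Lemma vertexI_nonadj u v : vI u -> vI v -> ~~ adj F u v.
Proof. by move=> Iu Iv; apply/negP=> /adj_face [w /(vertexI_face_nbr Iu)]; rewrite Iv. Qed.

(* Every face contains a vertex of type I, namely the one opposite its
   edge of type II. *)
Lemma face_vertexI x y z : [set x; y; z] \in F -> [|| vI x, vI y | vI z].
Proof.
move=> xyz; have := face_edgeI xyz.
case Exy: (eI x y); last by rewrite (vertexI_of_typeII xyz) ?Exy ?orbT.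
case Eyz: (eI y z).
  case Ezx: (eI z x) => //.
  by rewrite (@vertexI_of_typeII z x y) ?Ezx ?orbT //; face_perm xyz.
by rewrite (@vertexI_of_typeII y z x) ?Eyz //; face_perm xyz.
Qed.

(* If a and b are the only vertices of type I, the faces at b are faces at a
   after replacing b by a: the face on the other side of p q contains a
   vertex of type I, which cannot be b. *)
Lemma apex_swap a b p q : vI b -> (forall v, vI v -> v = a \/ v = b) ->
  [set b; p; q] \in F -> [set a; p; q] \in F.
Proof.
move=> Ib typeI_ab bpq; have [r [rb pqr]] := opposite_face bpq.
have bqp : [set b; q; p] \in F by face_perm bpq.
move: (face_vertexI pqr).
rewrite (negPf (vertexI_face_nbr Ib bpq)) (negPf (vertexI_face_nbr Ib bqp)) /=.
case/typeI_ab=> [ra|rb']; first by move: pqr; rewrite ra set3_rotr.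
by rewrite rb' eqxx in rb.
Qed.

Section TwoVerticesOfTypeI.
Variables a b : V.
Hypothesis ab : a != b.
Hypothesis Ia : vI a.
Hypothesis Ib : vI b.
Hypothesis typeI_ab : forall v, vI v -> v = a \/ v = b.

Lemma typeI_ba v : vI v -> v = b \/ v = a.
Proof. by case/typeI_ab; [right | left]. Qed.

Lemma face_apex f : f \in F ->
  exists p q, (f = [set a; p; q] \/ f = [set b; p; q]) /\ [set a; p; q] \in F.
Proof.
move=> fF; have [t [p [q [It Ef tpq]]]] :
    exists t p q, [/\ vI t, f = [set t; p; q] & [set t; p; q] \in F].
  have [u [v [w Ef]]] := face_triple fF; have uvw := fF; rewrite Ef in uvw.
  case/or3P: (face_vertexI uvw) => I.
  - by exists u, v, w; split.
  - have vuw : [set v; u; w] \in F by face_perm uvw.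
    by exists v, u, w; split => //; rewrite Ef set3C12.
  - have wuv : [set w; u; v] \in F by face_perm uvw.
    by exists w, u, v; split => //; rewrite Ef set3_rotr.
exists p, q; case: (typeI_ab It) => Et; rewrite -Et; first by split; [left|].
by split; [right | apply: (apex_swap Ib typeI_ab); rewrite -Et].
Qed.

Lemma adj_apex v : v != a -> v != b -> adj F a v.
Proof.
move=> va vb; have [u [w vuw]] := vertex_face v.
have nIv : ~~ vI v by apply/negP=> /typeI_ab [] /eqP; rewrite ?(negPf va) ?(negPf vb).
have [t [q [It tvq]]] : exists t q, vI t /\ [set t; v; q] \in F.
  move: (face_vertexI vuw); rewrite (negPf nIv) /= => /orP [Iu|Iw].
    by exists u, w; split => //; face_perm vuw.
  by exists w, u; split => //; face_perm vuw.
case: (typeI_ab It) => Et; rewrite Et in tvq; first exact: face_adj tvq.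
exact: face_adj (apex_swap Ib typeI_ab tvq).
Qed.

Section Bipyramid.
Variable n : nat.
Variable c : nat -> V.
Hypothesis c_inj : forall i j, i < n -> j < n -> c i = c j -> i = j.
Hypothesis c_mod : forall i, c (i %% n) = c i.
Hypothesis c_face : forall i, [set a; c i; c i.+1] \in F.
Hypothesis c_edges : forall p q, [set a; p; q] \in F -> exists2 j, j < n &
  ((p == c j) && (q == c j.+1)) || ((q == c j) && (p == c j.+1)).
Hypothesis c_cover : forall y, adj F a y -> exists2 i, i < n & y = c i.

Definition bp_map (s : BPV n) : V :=
  match s with inl i => c i | inr apex => if apex then a else b end.

(* The link of a avoids a, and also b, which is not adjacent to a. *)
Lemma c_neq_a i : c i != a.
Proof. by have [+ _ _] := face_distinct (c_face i); rewrite eq_sym. Qed.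

Lemma c_neq_b i : c i != b.
Proof.
apply/eqP=> Eb; have := vertexI_nonadj Ia Ib.
by rewrite -Eb (face_adj (c_face i)).
Qed.

(* bp_map is a bijection: a, b and the distinct c_i exhaust V, since every
   vertex other than a and b is a neighbour of a. *)
Lemma bp_map_inj : injective bp_map.
Proof.
have ba : b != a by rewrite eq_sym.
move=> [i|[]] [j|[]] //= E.
- by move: (c_inj (ltn_ord i) (ltn_ord j) E) => /val_inj ->.
- by have := c_neq_a i; rewrite E eqxx.
- by have := c_neq_b i; rewrite E eqxx.
- by have := c_neq_a j; rewrite E eqxx.
- by move: ab; rewrite E eqxx.
- by have := c_neq_b j; rewrite E eqxx.
- by move: ba; rewrite E eqxx.
Qed.

Lemma bp_map_bij : bijective bp_map.
Proof.
apply: (inj_card_bij bp_map_inj).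
have onto : [set: V] \subset bp_map @: [set: BPV n].
  apply/subsetP => v _.
  case: (eqVneq v a) => [->|va]; first by apply/imsetP; exists (inr true).
  case: (eqVneq v b) => [->|vb]; first by apply/imsetP; exists (inr false).
  have [i ilt ->] := c_cover (adj_apex va vb).
  by apply/imsetP; exists (inl (Ordinal ilt)).
rewrite -cardsT -(cardsT (BPV n)).
exact: leq_trans (subset_leq_card onto) (leq_imset_card _ _).
Qed.

Lemma bp_map_triangle (apex : bool) (j : 'I_n) :
  bp_map @: [set inr apex; inl j; inl (ordS j)] = [set bp_map (inr apex); c j; c j.+1].
Proof. by rewrite !imsetU !imset_set1 /= c_mod. Qed.

Lemma bp_map_face (Y : {set BPV n}) : (bp_map @: Y \in F) = (Y \in BPfaces n).
Proof.
apply/idP/idP => [YF|].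
- have [p [q [Ef apq]]] := face_apex YF.
  have [j jn pq_j] := c_edges apq; pose jo := Ordinal jn.
  have Epq (t : V) : [set t; p; q] = [set t; c jo; c jo.+1].
    by case/orP: pq_j => /andP [/eqP -> /eqP ->] //; rewrite set3C23.
  case: Ef => Ef; [rewrite (Epq a) -(bp_map_triangle true jo) in Ef |
                   rewrite (Epq b) -(bp_map_triangle false jo) in Ef];
  rewrite (imset_inj bp_map_inj Ef) !inE; apply/orP; [left | right];
  by apply/imsetP; exists jo.
- rewrite inE => /orP [] /imsetP [j _ ->]; rewrite bp_map_triangle //=.
  exact: (apex_swap Ia typeI_ba).
Qed.

End Bipyramid.

Lemma two_vertexI_bipyramid : exists2 n, 3 <= n & tri_iso F (BPfaces n).
Proof.
have [u [w auw]] := vertex_face a.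
have [n [c [[n3 c_inj c_mod c_face c_edges] c_cover]]] := link_cycle auw.
exists n => //; apply: (tri_iso_of_bij (bp_map_bij c_inj c_face c_cover)).
exact: bp_map_face c_inj c_mod c_face c_edges.
Qed.

End TwoVerticesOfTypeI.
End ZOrientation.
End Triangulation.

Theorem mainTheorem12 (V : finType) (F : {set {set V}}) (S : pred (state V)) :
  is_triangulation F ->
  z_orientation F S ->
  (forall f, f \in F -> faceI F S f) ->
  all_homogeneous F S ->
  #|[set v | vertexI F S v]| = 2 ->
  exists2 n, 3 <= n & tri_iso F (BPfaces n).
Proof.
move=> [_ [card3 two_faces face_cover link_conn _]] [zstep_inv zrev] facesI homog.
case/eqP/cards2P=> a [b [ab typeI_set]].
have typeI_ab v : vertexI F S v -> v = a \/ v = b.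
  have : (v \in [set v | vertexI F S v]) = vertexI F S v by rewrite inE.
  by rewrite typeI_set !inE => <- /orP [] /eqP; [left | right].
have [Ia Ib] : vertexI F S a /\ vertexI F S b.
  by rewrite -!(in_set (vertexI F S)) typeI_set !inE !eqxx orbT.
exact: (two_vertexI_bipyramid card3 two_faces face_cover link_conn
          zstep_inv zrev facesI homog ab Ia Ib typeI_ab).
Qed.
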